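(* There exist positive constants $c_1,c_2$ and constants $\delta_0=1/8$, $\alpha_0=e^{-8}/4$ such that for every $\delta\in(0,\delta_0)$, every $\alpha\in(0,\alpha_0)$, and every (randomized) algorithm that solves $(\delta,\alpha)$-BAIF, there exists a problem instance on which the expected number of arm pulls $T$ of the algorithm satisfies $\mathbb{E}[T]\ge c_1\frac{1}{\delta^2}\log\frac{c_2}{\alpha}$. In particular, the sample complexity of any algorithm solving $(\delta,\alpha)$-BAIF is $\Omega(\frac{1}{\delta^2}\log\frac1\alpha)$.
   Context: Best arm identification with failure, $(\delta,\alpha)$-BAIF: there are two arms $a_0,a_1$ with binary rewards in $\{0,1\}$; each pull of an arm gives an independent Bernoulli reward, and one arm has mean $\frac12+\frac\delta2$ (the optimal arm) while the other has mean $\frac12-\frac\delta2$, where $\delta\in(0,1)$. An algorithm adaptively pulls arms and then either returns FAIL or returns an arm. It solves $(\delta,\alpha)$-BAIF if on every such instance it returns FAIL with probability at most $\frac18$, and, conditioned on not returning FAIL, it returns the optimal arm with probability at least $1-\alpha$. *)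

From HB Require Import structures.
From mathcomp Require Import all_boot all_order all_algebra.
From mathcomp Require Import all_classical all_reals all_analysis.
Set Implicit Arguments. Unset Strict Implicit. Unset Printing Implicit Defensive.
Import Order.TTheory GRing.Theory Num.Theory.
Local Open Scope ring_scope.

(* Arms are booleans: false = a_0, true = a_1.
   A history is the chronological sequence of (arm pulled, reward observed). *)
Definition history := seq (bool * bool).

Inductive action := Pull of bool | Fail | Ret of bool.

(* A (randomized, adaptive) algorithm: after each history it chooses its next
   action according to a probability distribution over the five actions
   (behavioural randomization). *)
Definition policy (R : realType) := history -> action -> R.

Definition is_policy (R : realType) (pol : policy R) : Prop :=
  forall h : history,
    [/\ forall a, 0 <= pol h a &
        pol h (Pull false) + pol h (Pull true) + pol h Fail
          + pol h (Ret false) + pol h (Ret true) = 1].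

Definition arm_mean (R : realType) (delta : R) (opt a : bool) : R :=
  if a == opt then 1/2 + delta/2 else 1/2 - delta/2.

Definition reward_prob (R : realType) (delta : R) (opt a r : bool) : R :=
  if r then arm_mean delta opt a else 1 - arm_mean delta opt a.

Fixpoint reach_from (R : realType) (pol : policy R) (delta : R) (opt : bool)
    (pre h : history) : R :=
  match h with
  | [::] => 1
  | (a, r) :: t =>
      pol pre (Pull a) * reward_prob delta opt a r
        * reach_from pol delta opt (rcons pre (a, r)) t
  end.

Definition reach (R : realType) (pol : policy R) (delta : R) (opt : bool)
    (h : history) : R := reach_from pol delta opt [::] h.

Local Open Scope ereal_scope.

Definition prob_outcome (R : realType) (pol : policy R) (delta : R)
    (opt : bool) (o : action) : \bar R :=
  \sum_(n <oo)
     (\sum_(h : n.-tuple (bool * bool))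
         (reach pol delta opt h * pol h o))%R%:E.

(* Expected number of pulls E[T] = sum_{n >= 0} P(T >= n+1), in [0, +oo]
   (it is +oo in particular when the algorithm fails to halt with
   positive probability). *)
Definition expected_pulls (R : realType) (pol : policy R) (delta : R)
    (opt : bool) : \bar R :=
  \sum_(n <oo)
     (\sum_(h : n.+1.-tuple (bool * bool)) reach pol delta opt h)%R%:E.

(* (delta, alpha)-BAIF: on every instance, P(FAIL) <= 1/8 and, conditioned
   on not returning FAIL (i.e. on returning an arm), the returned arm is the
   optimal one with probability at least 1 - alpha (written multiplicatively
   to avoid dividing by the probability of the conditioning event). *)
Definition solves_BAIF (R : realType) (pol : policy R) (delta alpha : R)
    : Prop :=
  forall opt : bool,
    prob_outcome pol delta opt Fail <= (1 / 8 : R)%:E /\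
    ((1 - alpha)%R)%:E *
      (prob_outcome pol delta opt (Ret false)
         + prob_outcome pol delta opt (Ret true))
      <= prob_outcome pol delta opt (Ret opt).

From HB Require Import structures.
From mathcomp Require Import all_boot all_order all_algebra.
From mathcomp Require Import all_classical all_reals all_analysis.
From mathcomp Require Import ring lra.
Import Order.TTheory GRing.Theory Num.Theory.
Local Open Scope ring_scope.

(* Compare the instance where a_0 is optimal with the one where a_1 is.  The
   likelihood of a history under the second is its likelihood under the first
   times exp(-c S), where S counts the observations favouring a_0 minus those
   favouring a_1, and c = ln((1+delta)/(1-delta)) <= 3 delta.  Summing the
   pointwise bound  t exp(-x) >= 1 + ln t - x  over the histories that stop
   before a horizon n or are still running at n gives
     (ln t + 1) P_0(return a_0 before n) - t P_1(return a_0 before n) - 1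
       <= c E_0[S at time min(T, n)] = c delta E_0[min(T, n)],
   the equality being Wald's identity (S drifts by delta per pull under the
   first instance).  If E_0[T] is finite there is a horizon with
   P_0(T >= n) <= 1/16; a correct algorithm then returns a_0 before n with
   probability >= 1/2 on the first instance and <= alpha on the second, and
   t = 1/(2 alpha) yields E_0[T] >= ln(1/(2 alpha)) / (8 delta^2). *)

Section real_facts.
Context {R : realType}.

Lemma lnD1_sub_expR_le (t x : R) : 0 < t -> ln t + 1 - t * expR (- x) <= x.
Proof.
move=> t_gt0; have := expR_ge1Dx (ln t - x).
by rewrite expRD lnK ?posrE //; lra.
Qed.

Lemma nonincreasing_summable_small (u : nat -> R) (M e : R) : 0 < e ->
  (forall m, u m.+1 <= u m) -> (forall k, \sum_(0 <= m < k) u m.+1 <= M) ->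
  exists n, u n <= e.
Proof.
move=> e_gt0 /nonincreasing_seqP u_noninc u_sum.
set n := (Num.bound (`|M| / e)).+1; exists n.
have n_u : n%:R * u n <= M.
  apply: le_trans (u_sum n).
  have -> : n%:R * u n = \sum_(0 <= m < n) u n.
    by rewrite sumr_const_nat subn0 mulr_natl.
  by apply: ler_sum_nat => m /andP[_ m_lt]; apply: u_noninc.
have n_e : `|M| < n%:R * e.
  rewrite -ltr_pdivrMr // /n -addn1 natrD.
  have := archi_boundP (divr_ge0 (normr_ge0 M) (ltW e_gt0)); lra.
have n_gt0 : 0 < n%:R :> R by rewrite ltr0n.
have := ler_norm M; nra.
Qed.

Lemma nneseries_le_ub (u : nat -> R) (M : R) : (forall m, 0 <= u m) ->
  (forall k, \sum_(0 <= m < k) u m <= M) -> (\sum_(m <oo) (u m)%:E <= M%:E)%E.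
Proof.
move=> u_ge0 u_sum.
apply: lime_le; first by apply: is_cvg_nneseries => m _ _; rewrite lee_fin.
by apply: nearW => k; rewrite sumEFin lee_fin; exact: u_sum.
Qed.

Lemma le_nneseries_partial (u : nat -> R) (M : R) : (forall m, 0 <= u m) ->
  (forall E, (forall k, \sum_(0 <= m < k) u m <= E) -> M <= E) ->
  (M%:E <= \sum_(m <oo) (u m)%:E)%E.
Proof.
move=> u_ge0 lb; set S := (\sum_(m <oo) (u m)%:E)%E.
have S_ge0 : (0 <= S)%E by apply: nneseries_ge0 => m _ _; rewrite lee_fin.
have [->|S_fin] := eqVneq S +oo%E; first exact: leey.
rewrite -(fineK (_ : S \is a fin_num)) ?ge0_fin_numE ?ltey // lee_fin.
apply: lb => k; rewrite -lee_fin fineK ?ge0_fin_numE ?ltey // -sumEFin.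
by apply: nneseries_lim_ge => m _ _; rewrite lee_fin.
Qed.

Lemma sumr_bool_pair (f : bool * bool -> R) :
  \sum_(x : bool * bool) f x =
  f (false, false) + f (false, true) + f (true, false) + f (true, true).
Proof.
rewrite (eq_bigr (fun p => f (p.1, p.2))); last by case.
by rewrite -(pair_bigA _ (fun a b => f (a, b))) /= !big_bool /=; ring.
Qed.

End real_facts.

Section history_sums.
Context {R : realType}.
Implicit Type F : history -> R.

Definition hsum (n : nat) F : R := \sum_(h : n.-tuple (bool * bool)) F h.

Lemma hsum0 F : hsum 0 F = F [::].
Proof.
rewrite /hsum (eq_bigr (fun _ => F [::])); last by move=> t _; rewrite [t]tuple0.
by rewrite sumr_const card_tuple.
Qed.

Lemma hsumS n F :
  hsum n.+1 F = \sum_(x : bool * bool) hsum n (fun t => F (x :: t)).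
Proof.
rewrite /hsum (reindex (fun p : (bool * bool) * n.-tuple (bool * bool) =>
  [tuple of p.1 :: p.2])) /=; first by rewrite pair_big.
exists (fun t : n.+1.-tuple _ => (thead t, [tuple of behead t])).
  by move=> [x t] _ /=; rewrite theadE; congr pair; apply/val_inj.
by move=> t _ /=; rewrite [RHS]tuple_eta.
Qed.

Lemma hsumSr n F :
  hsum n.+1 F = hsum n (fun h => \sum_(x : bool * bool) F (rcons h x)).
Proof.
elim: n F => [|n IH] F.
  by rewrite hsumS hsum0; apply: eq_bigr => x _; rewrite hsum0.
by rewrite hsumS [RHS]hsumS; apply: eq_bigr => x _; rewrite IH.
Qed.

End history_sums.

Section bandit.
Context {R : realType}.
Variables (pol : policy R) (delta : R).
Hypotheses (polP : is_policy pol) (delta_gt0 : 0 < delta) (delta_lt1 : delta < 1).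

(* [lra] does not use section hypotheses, hence the local copies
   [d_gt0], [d_lt1] in some proofs below. *)

Lemma pol_ge0 h a : 0 <= pol h a.
Proof. by have [] := polP h. Qed.

Definition stop_prob (h : history) : R :=
  pol h Fail + pol h (Ret false) + pol h (Ret true).

Lemma pull_probE h : pol h (Pull false) + pol h (Pull true) = 1 - stop_prob h.
Proof. by have [_ <-] := polP h; rewrite /stop_prob; ring. Qed.

Lemma reach_from_ge0 opt pre h : 0 <= reach_from pol delta opt pre h.
Proof.
elim: h pre => [|[a r] h IH] pre /=; first exact: ler01.
rewrite !mulr_ge0 ?pol_ge0 ?IH //.
have [d_gt0 d_lt1] := (delta_gt0, delta_lt1).
by rewrite /reward_prob /arm_mean; case: r; case: (a == opt) => /=; lra.
Qed.

Lemma reach_ge0 opt h : 0 <= reach pol delta opt h.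
Proof. exact: reach_from_ge0. Qed.

Lemma reach_from_rcons opt pre h a r :
  reach_from pol delta opt pre (rcons h (a, r)) =
  reach_from pol delta opt pre h * pol (pre ++ h) (Pull a)
    * reward_prob delta opt a r.
Proof.
elim: h pre => [|[b s] h IH] pre /=; first by rewrite cats0 mul1r mulr1.
by rewrite IH cat_rcons !mulrA.
Qed.

Lemma reach_rcons opt h a r :
  reach pol delta opt (rcons h (a, r)) =
  reach pol delta opt h * pol h (Pull a) * reward_prob delta opt a r.
Proof. exact: reach_from_rcons. Qed.

Lemma sum_reach_rcons opt h :
  \sum_(x : bool * bool) reach pol delta opt (rcons h x) =
  reach pol delta opt h * (1 - stop_prob h).
Proof.
rewrite sumr_bool_pair !reach_rcons -pull_probE /reward_prob /arm_mean.
by case: opt => /=; ring.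
Qed.

(* [score x] is [+1] when the observation [x = (arm, reward)] favours [a_0]
   being optimal (a reward from [a_0], or none from [a_1]) and [-1] otherwise;
   [llr * total_score h] is then the log-likelihood ratio of the instance
   with optimal arm [a_0] against the one with optimal arm [a_1]. *)
Definition score (x : bool * bool) : R := if x.2 == ~~ x.1 then 1 else -1.

Definition total_score (h : history) : R := \sum_(x <- h) score x.

Definition llr : R := ln (1/2 + delta/2) - ln (1/2 - delta/2).

Lemma total_score_rcons h x : total_score (rcons h x) = total_score h + score x.
Proof. by rewrite /total_score -cats1 big_cat big_seq1. Qed.

Lemma expR_llr : expR llr = (1/2 + delta/2) / (1/2 - delta/2).
Proof.
have [d_gt0 d_lt1] := (delta_gt0, delta_lt1).
by rewrite /llr expRD expRN !lnK ?posrE //; lra.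
Qed.

Lemma llr_le : delta <= 1/3 -> llr <= 3 * delta.
Proof.
move=> delta_le; have d_gt0 := delta_gt0.
have := expR_ge1Dx llr; rewrite expR_llr.
have : (1/2 + delta/2) / (1/2 - delta/2) <= 1 + 3 * delta.
  by rewrite ler_pdivrMr; nra.
lra.
Qed.

Lemma reward_prob_true a r :
  reward_prob delta true a r =
  reward_prob delta false a r * expR (- (llr * score (a, r))).
Proof.
have [d_gt0 d_lt1] := (delta_gt0, delta_lt1).
have d1 : 1 - delta != 0 by apply/eqP; lra.
have d2 : 1 + delta != 0 by apply/eqP; lra.
rewrite /reward_prob /arm_mean /score.
case: a; case: r => /=; rewrite ?mulr1 ?mulrN1 ?expRN ?invrK expR_llr.
all: by field; rewrite ?d1 ?d2.
Qed.

Lemma reach_from_true pre h :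
  reach_from pol delta true pre h =
  reach_from pol delta false pre h * expR (- (llr * total_score h)).
Proof.
elim: h pre => [|[a r] h IH] pre /=.
  by rewrite /total_score big_nil mulr0 oppr0 expR0 mulr1.
rewrite IH reward_prob_true /total_score big_cons mulrDr opprD expRD.
ring.
Qed.

Lemma reach_true h :
  reach pol delta true h =
  reach pol delta false h * expR (- (llr * total_score h)).
Proof. exact: reach_from_true. Qed.

Lemma sum_reach_score_rcons h :
  \sum_(x : bool * bool)
     reach pol delta false (rcons h x) * total_score (rcons h x) =
  reach pol delta false h * (1 - stop_prob h) * (total_score h + delta).
Proof.
rewrite sumr_bool_pair !reach_rcons !total_score_rcons -pull_probE.
by rewrite /reward_prob /arm_mean /score /=; field.
Qed.

(* With T the number of pulls: [prob_alive opt n] is P(T >= n),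
   [prob_stop_at opt n o] is P(T = n and the final action is o), and
   [prob_before opt n o] is P(T < n and the final action is o). *)
Definition prob_alive opt n : R := hsum n (reach pol delta opt).

Definition prob_stop_at opt n o : R :=
  hsum n (fun h => reach pol delta opt h * pol h o).

Definition prob_stop opt n : R :=
  hsum n (fun h => reach pol delta opt h * stop_prob h).

Definition prob_before opt n o : R := \sum_(0 <= m < n) prob_stop_at opt m o.

Definition terminal (o : action) : bool := if o is Pull _ then false else true.

Lemma prob_stopE opt n :
  prob_stop opt n = prob_stop_at opt n Fail + prob_stop_at opt n (Ret false)
                    + prob_stop_at opt n (Ret true).
Proof.
rewrite /prob_stop /prob_stop_at /hsum -!big_split /=.
by apply: eq_bigr => h _; rewrite /stop_prob; ring.
Qed.

Lemma prob_alive0 opt : prob_alive opt 0 = 1.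
Proof. exact: hsum0. Qed.

Lemma prob_aliveS opt n :
  prob_alive opt n.+1 = prob_alive opt n - prob_stop opt n.
Proof.
rewrite /prob_alive hsumSr /prob_stop /hsum -sumrB.
by apply: eq_bigr => h _; rewrite sum_reach_rcons; ring.
Qed.

Lemma prob_stop_at_ge0 opt n o : 0 <= prob_stop_at opt n o.
Proof. by apply: sumr_ge0 => h _; rewrite mulr_ge0 ?reach_ge0 ?pol_ge0. Qed.

Lemma prob_alive_ge0 opt n : 0 <= prob_alive opt n.
Proof. by apply: sumr_ge0 => h _; exact: reach_ge0. Qed.

Lemma prob_stop_at_le opt n o : terminal o ->
  prob_stop_at opt n o <= prob_stop opt n.
Proof.
rewrite prob_stopE.
have := prob_stop_at_ge0 opt n Fail.
have := prob_stop_at_ge0 opt n (Ret false).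
have := prob_stop_at_ge0 opt n (Ret true).
by case: o => [//||[]] *; lra.
Qed.

Lemma prob_alive_le opt n : prob_alive opt n.+1 <= prob_alive opt n.
Proof.
rewrite prob_aliveS gerBl prob_stopE.
by rewrite !addr_ge0 ?prob_stop_at_ge0.
Qed.

Lemma sum_prob_stop opt n k : (n <= k)%N ->
  \sum_(n <= m < k) prob_stop opt m = prob_alive opt n - prob_alive opt k.
Proof.
move=> n_le_k.
rewrite -opprB -(telescope_sumr_eq _ (fun m => - prob_stop opt m) n_le_k).
  by rewrite sumrN opprK.
by move=> m _; rewrite prob_aliveS; ring.
Qed.

Lemma sum_prob_before opt n :
  prob_before opt n Fail + prob_before opt n (Ret false)
  + prob_before opt n (Ret true) + prob_alive opt n = 1.
Proof.
rewrite /prob_before -!big_split /=.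
under eq_bigr do rewrite -prob_stopE.
by rewrite sum_prob_stop // prob_alive0; ring.
Qed.

Lemma prob_outcome_sum opt o :
  prob_outcome pol delta opt o = (\sum_(m <oo) (prob_stop_at opt m o)%:E)%E.
Proof. by []. Qed.

Lemma expected_pulls_sum opt :
  expected_pulls pol delta opt = (\sum_(m <oo) (prob_alive opt m.+1)%:E)%E.
Proof. by []. Qed.

Lemma prob_outcome_ge_before opt n o :
  ((prob_before opt n o)%:E <= prob_outcome pol delta opt o)%E.
Proof.
rewrite /prob_before -sumEFin.
by apply: nneseries_lim_ge => m _ _; rewrite lee_fin prob_stop_at_ge0.
Qed.

Lemma prob_outcome_le_before opt n o : terminal o ->
  (prob_outcome pol delta opt o
     <= (prob_before opt n o + prob_alive opt n)%:E)%E.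
Proof.
move=> o_term; apply: nneseries_le_ub => [m|k]; first exact: prob_stop_at_ge0.
have stop_ge0 m := prob_stop_at_ge0 opt m o.
have alive_ge0 := prob_alive_ge0 opt n.
rewrite /prob_before; case: (leqP k n) => [k_le_n | n_lt_k].
  rewrite (big_cat_nat (leq0n k) k_le_n) /=.
  have : 0 <= \sum_(k <= m < n) prob_stop_at opt m o by exact: sumr_ge0.
  lra.
rewrite (big_cat_nat (leq0n n) (ltnW n_lt_k)) lerD2l.
apply: le_trans (_ : \sum_(n <= m < k) prob_stop opt m <= _).
  by apply: ler_sum => m _; exact: prob_stop_at_le.
by rewrite sum_prob_stop ?(ltnW n_lt_k) // gerBl prob_alive_ge0.
Qed.

Lemma prob_outcome_Ret_le1 opt :
  (prob_outcome pol delta opt (Ret false) + prob_outcome pol delta opt (Ret true)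
     <= 1%:E)%E.
Proof.
rewrite !prob_outcome_sum -nneseriesD; first last.
- by move=> m _ _; rewrite lee_fin prob_stop_at_ge0.
- by move=> m _ _; rewrite lee_fin prob_stop_at_ge0.
under eq_eseriesr do rewrite -EFinD.
apply: nneseries_le_ub => [m|k]; first by rewrite addr_ge0 ?prob_stop_at_ge0.
have := sum_prob_before opt k; rewrite /prob_before big_split /=.
have := prob_alive_ge0 opt k.
have : 0 <= \sum_(0 <= m < k) prob_stop_at opt m Fail.
  by apply: sumr_ge0 => m _; exact: prob_stop_at_ge0.
lra.
Qed.

Definition prob_out opt o : R := fine (prob_outcome pol delta opt o).

Lemma prob_outcomeE opt o : terminal o ->
  prob_outcome pol delta opt o = (prob_out opt o)%:E.
Proof.
move=> o_term; rewrite fineK // ge0_fin_numE.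
  by apply: le_lt_trans (prob_outcome_le_before opt 0 o o_term) _; rewrite ltey.
by apply: le_trans (prob_outcome_ge_before opt 0 o); rewrite /prob_before big_geq.
Qed.

Lemma prob_before_le_out opt n o : terminal o ->
  prob_before opt n o <= prob_out opt o.
Proof. by move=> o_term; rewrite -lee_fin -prob_outcomeE ?prob_outcome_ge_before. Qed.

Lemma prob_out_le_before opt n o : terminal o ->
  prob_out opt o <= prob_before opt n o + prob_alive opt n.
Proof. by move=> o_term; rewrite -lee_fin -prob_outcomeE ?prob_outcome_le_before. Qed.

Lemma prob_out_Ret_le1 opt : prob_out opt (Ret false) + prob_out opt (Ret true) <= 1.
Proof. by rewrite -lee_fin EFinD -!prob_outcomeE ?prob_outcome_Ret_le1. Qed.

Lemma BAIF_before_wrong (alpha : R) n : 0 <= alpha ->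
  solves_BAIF pol delta alpha -> prob_before true n (Ret false) <= alpha.
Proof.
move=> alpha_ge0 /(_ true)[_]; rewrite !prob_outcomeE // -EFinD -EFinM lee_fin.
have := prob_before_le_out true n (Ret false) erefl.
have sum_le1 := prob_out_Ret_le1 true.
have : alpha * (prob_out true (Ret false) + prob_out true (Ret true)) <= alpha.
  by rewrite -[leRHS]mulr1 ler_wpM2l.
lra.
Qed.

Lemma BAIF_before_opt (alpha : R) n : alpha <= 1/4 ->
  solves_BAIF pol delta alpha -> prob_alive false n <= 1/16 ->
  1/2 <= prob_before false n (Ret false).
Proof.
move=> alpha_le /(_ false)[]; rewrite !prob_outcomeE // -EFinD -EFinM !lee_fin.
move=> fail_le correct alive_le.
have mass := sum_prob_before false n.
have fail_ge := prob_before_le_out false n Fail erefl.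
have ret_opt_ge := prob_before_le_out false n (Ret false) erefl.
have ret_wrong_ge := prob_before_le_out false n (Ret true) erefl.
have ret_opt_le := prob_out_le_before false n (Ret false) erefl.
have ret_ge : 13/16 <= prob_out false (Ret false) + prob_out false (Ret true).
  by lra.
have : 3/4 * (prob_out false (Ret false) + prob_out false (Ret true))
       <= (1 - alpha) * (prob_out false (Ret false) + prob_out false (Ret true)).
  by rewrite ler_wpM2r //; lra.
lra.
Qed.

Definition score_alive n : R :=
  hsum n (fun h => reach pol delta false h * total_score h).

Definition score_stop n : R :=
  hsum n (fun h => reach pol delta false h * stop_prob h * total_score h).

Lemma wald_identity n :
  score_alive n + \sum_(0 <= m < n) score_stop m =
  delta * \sum_(0 <= m < n) prob_alive false m.+1.
Proof.
elim: n => [|n IH].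
  by rewrite !big_geq // /score_alive hsum0 /total_score big_nil mulr0 addr0 mulr0.
have -> : score_alive n.+1 =
          score_alive n - score_stop n + delta * prob_alive false n.+1.
  rewrite /score_alive hsumSr prob_aliveS /prob_alive /prob_stop /score_stop.
  rewrite /hsum -!sumrB mulr_sumr -big_split /=.
  by apply: eq_bigr => h _; rewrite sum_reach_score_rcons; ring.
by rewrite !big_nat_recr //= mulrDr -IH; ring.
Qed.

Lemma change_of_measure_alive h :
  - reach pol delta true h <= llr * (reach pol delta false h * total_score h).
Proof.
have r0_ge0 := reach_ge0 false h.
have := ler_wpM2l r0_ge0 (lnD1_sub_expR_le _ (llr * total_score h) ltr01).
rewrite reach_true ln1; lra.
Qed.

Lemma change_of_measure_stop (t : R) h : 0 < t ->
  (ln t + 1) * (reach pol delta false h * pol h (Ret false))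
  - t * (reach pol delta true h * pol h (Ret false))
  - reach pol delta true h * stop_prob h
  <= llr * (reach pol delta false h * stop_prob h * total_score h).
Proof.
move=> t_gt0; rewrite reach_true /stop_prob.
set r0 := reach _ _ _ h; set e := expR _.
have r0_ge0 : 0 <= r0 by exact: reach_ge0.
have pF := pol_ge0 h Fail; have pR0 := pol_ge0 h (Ret false).
have pR1 := pol_ge0 h (Ret true).
have ret_opt := ler_wpM2l (mulr_ge0 r0_ge0 pR0)
  (lnD1_sub_expR_le _ (llr * total_score h) t_gt0).
have other_ge0 := mulr_ge0 r0_ge0 (addr_ge0 pF pR1).
have ret_other := ler_wpM2l other_ge0
  (lnD1_sub_expR_le _ (llr * total_score h) ltr01).
have : 0 <= r0 * e * pol h (Ret false) by rewrite !mulr_ge0 ?expR_ge0.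
rewrite ln1 -/e in ret_opt ret_other; lra.
Qed.

Lemma change_of_measure (t : R) n : 0 < t ->
  (ln t + 1) * prob_before false n (Ret false)
  - t * prob_before true n (Ret false) - 1
  <= llr * (score_alive n + \sum_(0 <= m < n) score_stop m).
Proof.
move=> t_gt0.
have alive_bound : - prob_alive true n <= llr * score_alive n.
  rewrite /prob_alive /score_alive /hsum mulr_sumr -sumrN.
  by apply: ler_sum => h _; exact: change_of_measure_alive.
have stop_bound m : (ln t + 1) * prob_stop_at false m (Ret false)
    - t * prob_stop_at true m (Ret false) - prob_stop true m
    <= llr * score_stop m.
  rewrite /prob_stop_at /prob_stop /score_stop /hsum !mulr_sumr -!sumrB.
  by apply: ler_sum => h _; exact: change_of_measure_stop.
have := ler_sum_nat (fun m _ => stop_bound m) (m := 0) (n := n).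
rewrite !sumrB -!mulr_sumr -/(prob_before false n _) -/(prob_before true n _).
have := sum_prob_stop true 0 n (leq0n n); rewrite prob_alive0.
rewrite mulrDr; lra.
Qed.

Lemma likelihood_ratio_bound (t : R) n : delta <= 1/3 -> 0 < t ->
  (ln t + 1) * prob_before false n (Ret false)
  - t * prob_before true n (Ret false) - 1
  <= 3 * delta ^+ 2 * \sum_(0 <= m < n) prob_alive false m.+1.
Proof.
move=> delta_le t_gt0; have := change_of_measure t n t_gt0.
rewrite wald_identity.
have : llr * (delta * \sum_(0 <= m < n) prob_alive false m.+1)
       <= 3 * delta * (delta * \sum_(0 <= m < n) prob_alive false m.+1).
  rewrite ler_wpM2r ?llr_le // mulr_ge0 ?(ltW delta_gt0) //.
  by apply: sumr_ge0 => m _; exact: prob_alive_ge0.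
rewrite expr2; lra.
Qed.

Lemma BAIF_log_bound (alpha E : R) : delta <= 1/3 -> 0 < alpha -> alpha <= 1/4 ->
  solves_BAIF pol delta alpha ->
  (forall k, \sum_(0 <= m < k) prob_alive false m.+1 <= E) ->
  ln (1/2 / alpha) / 2 - 1 <= 3 * delta ^+ 2 * E.
Proof.
move=> delta_le alpha_gt0 alpha_le solves E_ub.
have [n alive_n] : exists n, prob_alive false n <= 1/16.
  by apply: nonincreasing_summable_small E_ub => // m; exact: prob_alive_le.
have ret_opt := BAIF_before_opt alpha n alpha_le solves alive_n.
have ret_wrong := BAIF_before_wrong alpha n (ltW alpha_gt0) solves.
set t := 1/2 / alpha.
have t_ge1 : 1 <= t by rewrite ler_pdivlMr //; lra.
have t_gt0 : 0 < t by apply: lt_le_trans t_ge1.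
have := likelihood_ratio_bound t n delta_le t_gt0.
have := ler_wpM2l (ler_wpDr ler01 (ln_ge0 t_ge1)) ret_opt.
have : t * prob_before true n (Ret false) <= 1/2.
  by rewrite -[leRHS](divfK (lt0r_neq0 alpha_gt0)) ler_pM2l.
have := ler_wpM2l (mulr_ge0 (ler0n _ 3) (sqr_ge0 delta)) (E_ub n).
lra.
Qed.

End bandit.

Theorem lemma5p1 (R : realType) :
  exists c1 c2 : R, 0 < c1 /\ 0 < c2 /\
    forall delta alpha : R,
      0 < delta < 1 / 8 ->
      0 < alpha < expR (-8) / 4 ->
      forall pol : policy R, is_policy pol ->
        solves_BAIF pol delta alpha ->
        exists opt : bool,
          ((c1 / delta ^+ 2 * ln (c2 / alpha))%:E
             <= expected_pulls pol delta opt)%E.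
Proof.
exists (1/8), (1/2); split; first lra; split; first lra.
move=> delta alpha /andP[d_gt0 d_lt] /andP[a_gt0 a_lt] pol polP solves.
have [d_lt1 d_le] : delta < 1 /\ delta <= 1/3 by split; lra.
have alpha_le : alpha <= 1/4.
  have : expR (-8) < 1 :> R by rewrite expR_lt1; lra.
  lra.
have ln_ge8 : 8 <= ln (1/2 / alpha).
  rewrite -ler_expR lnK ?posrE ?divr_gt0 // ler_pdivlMr //.
  have : expR 8 * expR (-8) = 1 :> R by rewrite -expRD addrN expR0.
  by have := expR_gt0 (8 : R); nra.
exists false; rewrite expected_pulls_sum.
apply: le_nneseries_partial => [m|E E_ub]; first by apply: prob_alive_ge0.
have := BAIF_log_bound pol delta polP d_gt0 d_lt1 alpha E d_le a_gt0 alpha_le.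
move=> /(_ solves E_ub) bound.
rewrite mulrAC ler_pdivrMr ?exprn_gt0 //; lra.
Qed.
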